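(* Let $\mathscr C$ be a full subcategory of the category of finite-dimensional $A$-modules which is closed under extensions, and let $p=\sum_{[M]}\mu_M[M]\in\mathcal H_v(Q,\sigma)_{\mathbf d}$ be primitive, i.e. $\Delta(p)=p\otimes1+1\otimes p$. Then $p_{\mathscr C}:=\sum_{[M]:\,M\in\mathscr C}\mu_M[M]$ is a primitive element of $\mathcal H(\mathscr C)_{\mathbf d}$, i.e. $\Delta_{\mathscr C}(p_{\mathscr C})=p_{\mathscr C}\otimes1+1\otimes p_{\mathscr C}$.
   Context: Let $Q$ be a finite quiver with automorphism $\sigma$ (permutation of vertices and arrows compatible with heads and tails), $\mathbb F_q$ a finite field, $F:\overline{\mathbb F}_qQ\to\overline{\mathbb F}_qQ$, $\sum_sx_sp_s\mapsto\sum_sx_s^q\sigma(p_s)$, and $A=\mathfrak A(Q,\sigma;q)=\{a\in\overline{\mathbb F}_qQ:F(a)=a\}$. Let $I$ be the set of $\sigma$-orbits of vertices, $\Gamma_1$ the $\sigma$-orbits of arrows, $\varepsilon_i,\varepsilon_\rho$ orbit sizes, $t\rho,h\rho\in I$ tail/head orbits; Euler form $\langle x,y\rangle=\sum_i\varepsilon_ix_iy_i-\sum_{\rho\in\Gamma_1}\varepsilon_\rho x_{t\rho}y_{h\rho}$; dimension vector $\mathbf{dim}M=\sum_i(\dim_{\mathbb F_{q^{\varepsilon_i}}}e_iM)i\in\mathbb NI$ ($e_i$ the idempotent for $i$). Ringel–Hall algebra $\mathcal H_v(Q,\sigma)$, $v=\sqrt q$: $\mathbb C$-basis isoclasses $[M]$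 of finite-dimensional $A$-modules; $[M][N]=\sum_{[L]}v^{\langle\mathbf{dim}M,\mathbf{dim}N\rangle}F^L_{M,N}[L]$, $F^L_{M,N}$ = number of submodules $X\subseteq L$ with $X\cong N$, $L/X\cong M$; $\Delta([M])=\sum_{[X],[Y]}v^{\langle\mathbf{dim}X,\mathbf{dim}Y\rangle}\frac{a_Xa_Y}{a_M}F^M_{X,Y}[X]\otimes[Y]$, $a_M=|\mathrm{Aut}_AM|$; unit $1=[0]$; $\mathcal H_v(Q,\sigma)_{\mathbf d}$ spanned by $[M]$ with $\mathbf{dim}M=\mathbf d$. For $\mathscr C$ as in the claim, $\mathcal H(\mathscr C)$ is the subalgebra spanned by $[M]$ with $M\in\mathscr C$, graded by dimension vector, with comultiplication $\Delta_{\mathscr C}([M])=\sum_{[X],[Y]:\,X,Y\in\mathscr C}v^{\langle\mathbf{dim}X,\mathbf{dim}Y\rangle}\frac{a_Xa_Y}{a_M}F^M_{X,Y}[X]\otimes[Y]$. *)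

From HB Require Import structures.
From mathcomp Require Import all_boot all_order all_algebra all_fingroup.
From mathcomp Require Import boolp.
From mathcomp Require Import Rstruct complex.

Set Implicit Arguments.
Unset Strict Implicit.
Unset Printing Implicit Defensive.

Import Order.TTheory GRing.Theory Num.Theory.
Local Open Scope ring_scope.

Definition CC : numClosedFieldType := complex Rdefinitions.R.

Record quiver_aut := QuiverAut {
  qV : finType;
  qE : finType;
  qtl : qE -> qV;
  qhd : qE -> qV;
  sV : {perm qV};
  sE : {perm qE};
  sigma_tl : forall a, qtl (sE a) = sV (qtl a);
  sigma_hd : forall a, qhd (sE a) = sV (qhd a)
}.

Section PathAlgebra.
Variable Q : quiver_aut.
Variable K : fieldType.
Variable q : nat.

(** A path is a starting vertex together with the list of its arrows
    [a1; ...; an], traversed in this order (tail a1 = start,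
    head a_k = tail a_(k+1)).  The trivial path e_v is (v, [::]). *)
Definition qpath := (qV Q * seq (qE Q))%type.

Fixpoint valid_from (v : qV Q) (l : seq (qE Q)) : bool :=
  if l is a :: l' then (qtl a == v) && valid_from (qhd a) l' else true.

Fixpoint end_from (v : qV Q) (l : seq (qE Q)) : qV Q :=
  if l is a :: l' then end_from (qhd a) l' else v.

Definition valid_path (x : qpath) := valid_from x.1 x.2.

Definition spath_inv (x : qpath) : qpath :=
  ((sV Q)^-1%g x.1, map ((sE Q)^-1%g) x.2).

Record pathalg := PathAlg {
  pcoef : qpath -> K;
  pcoef_fin : exists s : seq qpath, forall x, pcoef x != 0 -> x \in s;
  pcoef_valid : forall x, pcoef x != 0 -> valid_path x
}.

(** Multiplication: p_s p_t is "first t, then s" (nonzero iff end t = start s),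
    so the coefficient of a path x in f g is sum_{x = s t} f(s) g(t). *)
Definition pmulf (f g : qpath -> K) (x : qpath) : K :=
  \sum_(k < (size x.2).+1)
     f (end_from x.1 (take k x.2), drop k x.2) * g (x.1, take k x.2).

Definition paddf (f g : qpath -> K) (x : qpath) : K := f x + g x.

Definition ponef (x : qpath) : K := if x.2 is [::] then 1 else 0.

(** F (sum_s x_s p_s) = sum_s x_s^q sigma(p_s); a is F-fixed iff
    coefficient at x equals (coefficient at sigma^{-1} x)^q. *)
Definition F_fixed (a : pathalg) : Prop :=
  forall x, pcoef a x = (pcoef a (spath_inv x)) ^+ q.

Definition Aalg := {a : pathalg | F_fixed a}.

Definition Acoef (a : Aalg) : qpath -> K := pcoef (sval a).

(** Finite-dimensional (left, unital) A-modules: finite abelian groups with an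
    action of A; ring axioms of the action are expressed through the
    coefficient description of sums/products/unit in K Q. *)
Record Amod := AMod {
  mcar : finZmodType;
  act : Aalg -> mcar -> mcar;
  act_addr : forall a m n, act a (m + n) = act a m + act a n;
  act_addl : forall a b c : Aalg,
      (forall x, Acoef c x = paddf (Acoef a) (Acoef b) x) ->
      forall m, act c m = act a m + act b m;
  act_mul : forall a b c : Aalg,
      (forall x, Acoef c x = pmulf (Acoef a) (Acoef b) x) ->
      forall m, act c m = act a (act b m);
  act_one : forall u : Aalg, (forall x, Acoef u x = ponef x) ->
      forall m, act u m = m
}.

Definition is_lin (M N : Amod) (f : mcar M -> mcar N) : Prop :=
  (forall m n, f (m + n) = f m + f n) /\
  (forall a m, f (@act M a m) = @act N a (f m)).

Definition mod_iso (M N : Amod) : Prop :=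
  exists f : mcar M -> mcar N, is_lin f /\ bijective f.

Definition zero_mod (M : Amod) : Prop := #|mcar M| = 1%N.

Definition aut_card (M : Amod) : nat :=
  #|[set g : {perm mcar M} | `[< is_lin (M:=M) (N:=M) g >] ]|.

Definition hall_num (M N L : Amod) : nat :=
  #|[set S : {set mcar L} |
     `[< (exists f : mcar N -> mcar L, is_lin f /\ injective f /\
            forall l, l \in S <-> exists n, f n = l) /\
         (exists g : mcar L -> mcar M, is_lin g /\ (forall m, exists l, g l = m) /\
            forall l, l \in S <-> g l = 0) >] ]|.

Definition is_ext (X Y M : Amod) : Prop :=
  exists (f : mcar Y -> mcar M) (g : mcar M -> mcar X),
    [/\ is_lin f, injective f, is_lin g, (forall x, exists m, g m = x) &
        forall m, (exists y, f y = m) <-> g m = 0].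


Definition idemf (i : {set qV Q}) (x : qpath) : K :=
  if (x.2 == [::]) && (x.1 \in i) then 1 else 0.

Definition eM (M : Amod) (i : {set qV Q}) : {set mcar M} :=
  [set m | `[< exists e : Aalg, (forall x, Acoef e x = idemf i x) /\
                               exists m', m = @act M e m' >] ].

(** Dimension vectors live in N I, I = sigma-orbits of vertices; we encode
    them as functions {set V} -> nat, only their values on orbits matter. *)
Definition dvec := {set qV Q} -> nat.

Definition orbits : {set {set qV Q}} := porbits (sV Q).

Definition dvec_eq (x y : dvec) : Prop := forall i, i \in orbits -> x i = y i.

(** (dim M)_i = dim over F_{q^{eps_i}} of e_i M, i.e. the exponent d with
    |e_i M| = (q^{eps_i})^d. *)
Definition dimv (M : Amod) : dvec :=
  fun i => trunc_log (q ^ #|i|) #|eM M i|.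

(** Euler form <x,y> = sum_i eps_i x_i y_i - sum_rho eps_rho x_{t rho} y_{h rho}. *)
Definition euler (x y : dvec) : int :=
  (\sum_(i in orbits) (#|i| * x i * y i)%N)%:Z -
  (\sum_(rho in porbits (sE Q))
     (if [pick a in rho] is Some a then
        (#|rho| * x (porbit (sV Q) (qtl a)) * y (porbit (sV Q) (qhd a)))%N
      else 0%N))%:Z.

Definition vv : CC := sqrtC (q%:R : CC).

(** Elements of the Hall algebra are written as finite sums
    sum_k mu_k [M_k], encoded by the list of pairs (M_k, mu_k). *)
Definition hall_elt := seq (Amod * CC).

Definition hcoef (p : hall_elt) (X : Amod) : CC :=
  \sum_(x <- p | `[< mod_iso x.1 X >]) x.2.

Definition one_coef (X : Amod) : CC := if `[< zero_mod X >] then 1 else 0.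

(** Coefficient of the basis element [X] (x) [Y] in Delta(p) (for X, Y in C,
    also in Delta_C(p) when p is supported on C). *)
Definition delta_coef (p : hall_elt) (X Y : Amod) : CC :=
  \sum_(x <- p)
     x.2 * (vv ^ euler (dimv X) (dimv Y)) *
     ((aut_card X)%:R * (aut_card Y)%:R / (aut_card x.1)%:R) *
     (hall_num X Y x.1)%:R.

Definition in_degree (p : hall_elt) (d : dvec) : Prop :=
  forall x, List.In x p -> dvec_eq (dimv x.1) d.

Definition primitive (p : hall_elt) : Prop :=
  forall X Y : Amod,
    delta_coef p X Y = hcoef p X * one_coef Y + one_coef X * hcoef p Y.

Definition restrictC (C : Amod -> Prop) (p : hall_elt) : hall_elt :=
  [seq x <- p | `[< C x.1 >] ].

(** p is a primitive element of H(C): Delta_C(p) = p (x) 1 + 1 (x) p, where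
    Delta_C only has the components [X] (x) [Y] with X, Y in C. *)
Definition primitiveC (C : Amod -> Prop) (p : hall_elt) : Prop :=
  forall X Y : Amod, C X -> C Y ->
    delta_coef p X Y = hcoef p X * one_coef Y + one_coef X * hcoef p Y.

End PathAlgebra.

From Pilot Require Import Defs.
From HB Require Import structures.
From mathcomp Require Import all_boot all_order all_algebra all_fingroup.
From mathcomp Require Import boolp.
From mathcomp Require Import Rstruct complex.
Import Order.TTheory GRing.Theory Num.Theory.
Local Open Scope ring_scope.

Set Implicit Arguments.
Unset Strict Implicit.

(* If F^M_{X,Y} is nonzero then M is an extension of X by Y, so for X, Y in C
   every nonzero term of the [X] (x) [Y]-coefficient of Delta(p) comes from a
   module M of C: this coefficient is the same for p and p_C.  Since C contains
   0 and is closed under extensions, it is closed under isomorphism (M ~ X makes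
   M an extension of X by 0), so p and p_C also have the same coefficients at
   every [X] with X in C.  Nothing about the field or q is used. *)

Lemma additive_map0 (U V : zmodType) (f : U -> V) :
  {morph f : x y / x + y} -> f 0 = 0.
Proof. by move=> fD; apply: (addrI (f 0)); rewrite -fD !addr0. Qed.

Lemma In_filter_asbool (T : Type) (P : T -> Prop) (s : seq T) x :
  List.In x [seq y <- s | `[< P y >] ] -> List.In x s /\ P x.
Proof.
elim: s => //= y s IHs; case: ifP => Py /=.
- by case=> [<-|/IHs[]]; [split; [left|apply/asboolP] | split; [right|]].
- by case/IHs; split; [right|].
Qed.

Section ExtensionClosed.
Variables (Q : quiver_aut) (K : fieldType) (q : nat).

Lemma is_lin0 (M N : Amod Q K q) (f : mcar M -> mcar N) : is_lin f -> f 0 = 0.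
Proof. by case=> fD _; apply: additive_map0. Qed.

Lemma act0 (M : Amod Q K q) a : @Defs.act _ _ _ M a 0 = 0.
Proof. exact/additive_map0/act_addr. Qed.

Definition zero_amod : Amod Q K q.
Proof.
refine (@AMod Q K q 'I_1 (fun _ m => m) _ _ _ _) => //.
by move=> *; rewrite [LHS]ord1 [RHS]ord1.
Defined.

Lemma zero_amod_zero : zero_mod zero_amod.
Proof. by rewrite /zero_mod card_ord. Qed.

Lemma mod_iso_ext0 (X M : Amod Q K q) : mod_iso M X -> is_ext X zero_amod M.
Proof.
case=> g [g_lin g_bij]; exists (fun _ => 0), g; split => //.
- by split=> [m n|a m]; rewrite ?addr0 ?act0.
- by move=> y y' _; rewrite [LHS]ord1 [RHS]ord1.
- by case: g_bij => g' _ gK x; exists (g' x); rewrite gK.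
- move=> m; split=> [[y <-] /=|gm0]; first by rewrite (is_lin0 g_lin).
  by exists ord0; apply: (bij_inj g_bij); rewrite gm0 (is_lin0 g_lin).
Qed.

Lemma hall_num_ext (X Y L : Amod Q K q) : ~ is_ext X Y L -> hall_num X Y L = 0%N.
Proof.
move=> not_ext; apply/eqP; rewrite cards_eq0; apply/eqP/setP => S.
rewrite !inE; apply/negbTE/negP => /asboolP[[f [f_lin [f_inj f_im]]]].
case=> g [g_lin [g_surj g_ker]]; apply: not_ext; exists f, g.
by split=> // m; split=> [/f_im/g_ker|/g_ker/f_im].
Qed.

Variable C : Amod Q K q -> Prop.
Hypothesis C_zero : forall Z, zero_mod Z -> C Z.
Hypothesis C_ext : forall X Y M, C X -> C Y -> is_ext X Y M -> C M.

Lemma ext_closed_iso (M X : Amod Q K q) : C X -> mod_iso M X -> C M.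
Proof.
move=> CX /mod_iso_ext0; apply: C_ext => //; exact/C_zero/zero_amod_zero.
Qed.

Lemma hcoef_restrictC (P : hall_elt Q K q) X :
  C X -> hcoef (restrictC C P) X = hcoef P X.
Proof.
move=> CX; rewrite /hcoef /restrictC big_filter_cond; apply: eq_bigl => x.
have [/asboolP isoX|] := boolP `[< mod_iso x.1 X >]; last by rewrite andbF.
by rewrite andbT; apply/asboolP; exact: ext_closed_iso CX isoX.
Qed.

Lemma delta_coef_restrictC (P : hall_elt Q K q) X Y :
  C X -> C Y -> delta_coef (restrictC C P) X Y = delta_coef P X Y.
Proof.
move=> CX CY; rewrite /delta_coef /restrictC big_filter big_mkcond /=.
apply: eq_bigr => x _; have [//|/asboolP notCx] := boolP `[< C x.1 >].
by rewrite hall_num_ext ?mulr0 // => /(C_ext CX CY).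
Qed.

End ExtensionClosed.

Theorem proposition3p1
  (p r : nat) (p_prime : prime p) (r_gt0 : (0 < r)%N)
  (K : closedFieldType) (K_char : p \in [pchar K])
  (K_alg : forall x : K, exists k : nat, (0 < k)%N /\ x ^+ (p ^ k) = x)
  (Q : quiver_aut)
  (C : Amod Q K (p ^ r) -> Prop)
  (C_zero : forall Z : Amod Q K (p ^ r), zero_mod Z -> C Z)
  (C_ext : forall X Y M : Amod Q K (p ^ r), C X -> C Y -> is_ext X Y M -> C M)
  (d : dvec Q) (P : hall_elt Q K (p ^ r))
  (P_deg : in_degree P d) (P_prim : primitive P) :
  in_degree (restrictC C P) d /\
  (forall x, List.In x (restrictC C P) -> C x.1) /\
  primitiveC C (restrictC C P).
Proof.
have In_restrictC x : List.In x (restrictC C P) -> List.In x P /\ C x.1.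
  exact: (@In_filter_asbool _ (fun y => C y.1)).
split; first by move=> x /In_restrictC[/P_deg].
split; first by move=> x /In_restrictC[].
move=> X Y CX CY.
have restrict_hcoef := hcoef_restrictC C_zero C_ext P.
rewrite (delta_coef_restrictC C_ext P CX CY) P_prim.
by rewrite (restrict_hcoef X CX) (restrict_hcoef Y CY).
Qed.
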